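(* In the PIR-PSI under a storage constraint model described in the context, fix a realization $h$ of the cached index set, with messages labelled so that $h=\{1,\dots,M\}$ and the first $Lr_i$ symbols of $W_i$ are cached for $i=1,\dots,M$; set $r_k=0$ for $k>M$. Then for every $k\in\{1,\dots,K-1\}$, $$I\big(W_{1:k};Q_{1:N}^{[k+1,h]},A_{1:N}^{[k+1,h]}\,\big|\,\mathcal{W}_h,W_{k+1:K}\big)\ \ge\ \frac1N\, I\big(W_{1:k-1};Q_{1:N}^{[k,h]},A_{1:N}^{[k,h]}\,\big|\,\mathcal{W}_h,W_{k:K}\big)+\frac{L}{N}(1-r_k)-o(L).$$
   Context: Model: $N$ non-communicating databases each store the same $K$ independent messages $W_1,\dots,W_K$, $H(W_k)=L$, jointly independent. The user accesses an index set $h\subset[K]$, $|h|=M$, and caches the first $Lr_i$ symbols of the $i$-th accessed message, $\sum_{i=1}^M r_i=S$; $\mathcal{W}_h$ denotes the cached content. For desired index $\theta$, queries $Q_n^{[\theta,h]}$, $n\in[N]$, are independent of $W_{1:K}$; answers satisfy $H(A_n^{[\theta,h]}\mid Q_n^{[\theta,h]},W_{1:K})=0$; reliability: $H(W_\theta\mid\mathcal{W}_h,Q_{1:N}^{[\theta,h]},A_{1:N}^{[\theta,h]})=o(L)$ where $o(L)/L\to0$ as $L\to\infty$; privacy: for each database $n$, $(Q_n^{[\theta,h]},A_n^{[\theta,h]},W_{1:K})$ has the same distribution for all $\theta\in[K]$ and all $M$-subsets $h$. Notation $X_{a:b}=(X_a,\dots,X_b)$, with $W_{1:0}$ empty. 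*)

From HB Require Import structures.
From mathcomp Require Import all_boot all_order all_algebra.
From mathcomp Require Import reals exp.
Set Implicit Arguments. Unset Strict Implicit. Unset Printing Implicit Defensive.
Import Order.TTheory GRing.Theory Num.Theory.
Local Open Scope ring_scope.

Definition is_distr (R : realType) (Om : finType) (p : Om -> R) : Prop :=
  (forall w, 0 <= p w) /\ \sum_(w : Om) p w = 1.

Definition prob (R : realType) (Om : finType) (p : Om -> R) (E : pred Om) : R :=
  \sum_(w : Om | E w) p w.

(* Shannon entropy in base b of a discrete random variable X : Om -> T,
   H(X) = - sum_x P(X=x) log_b P(X=x) = - sum_w p(w) log_b P(X = X w). *)
Definition entropy (R : realType) (Om : finType) (p : Om -> R) (b : R)
  (T : eqType) (X : Om -> T) : R :=
  - \sum_(w : Om) p w * (ln (prob p (fun v => X v == X w)) / ln b).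

Definition pairRV (Om : Type) (T U : Type) (X : Om -> T) (Y : Om -> U) :
  Om -> T * U := fun w => (X w, Y w).

Definition centropy (R : realType) (Om : finType) (p : Om -> R) (b : R)
  (T U : eqType) (X : Om -> T) (Y : Om -> U) : R :=
  entropy p b (pairRV X Y) - entropy p b Y.

Definition minfo (R : realType) (Om : finType) (p : Om -> R) (b : R)
  (T U V : eqType) (X : Om -> T) (Y : Om -> U) (Z : Om -> V) : R :=
  centropy p b X Z - centropy p b X (pairRV Y Z).

Definition indep (R : realType) (Om : finType) (p : Om -> R)
  (T U : eqType) (X : Om -> T) (Y : Om -> U) : Prop :=
  forall x y, prob p (fun w => (X w == x) && (Y w == y))
              = prob p (fun w => X w == x) * prob p (fun w => Y w == y).

Definition mutually_indep (R : realType) (Om : finType) (p : Om -> R)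
  (I : finType) (T : eqType) (X : I -> Om -> T) : Prop :=
  forall x : I -> T,
    prob p (fun w => [forall i, X i w == x i])
    = \prod_(i : I) prob p (fun w => X i w == x i).

Definition same_distr (R : realType) (Om : finType) (p : Om -> R)
  (T : eqType) (X Y : Om -> T) : Prop :=
  forall v, prob p (fun w => X w == v) = prob p (fun w => Y w == v).

Definition msgs (Om F : finType) (L K : nat) (W : 'I_K -> Om -> {ffun 'I_L -> F})
  (w : Om) : {ffun 'I_K -> {ffun 'I_L -> F}} := [ffun j => W j w].

(* W_{a+1 : b} in 1-indexed notation, i.e. the messages with 0-based index
   j such that a <= j < b. *)
Definition Wseg (Om F : finType) (L K : nat) (W : 'I_K -> Om -> {ffun 'I_L -> F})
  (a b : nat) (w : Om) : seq {ffun 'I_L -> F} :=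
  [seq W j w | j <- [seq j <- enum 'I_K | (a <= nat_of_ord j < b)%N]].

(* cached content W_h: the i-th accessed message (elements of h in increasing
   order) has its first c i = L r_i symbols cached. *)
Definition cacheRV (Om F : finType) (L K M : nat)
  (W : 'I_K -> Om -> {ffun 'I_L -> F}) (c : 'I_M -> nat) (h : {set 'I_K})
  (w : Om) : seq (seq F) :=
  [seq take jn.2 (val (fgraph (W jn.1 w)))
  | jn <- zip (enum h) [seq c i | i <- enum 'I_M]].

(* number of cached symbols L r_{k+1} of the (k+1)-th accessed message
   (0-based index k); equals 0 for k >= M. *)
Definition cache_size (M : nat) (c : 'I_M -> nat) (k : nat) : nat :=
  nth 0%N [seq c i | i <- enum 'I_M] k.

Definition QAall (Om : finType) (N K : nat) (Qt At : eqType)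
  (Q : 'I_N -> 'I_K -> {set 'I_K} -> Om -> Qt)
  (A : 'I_N -> 'I_K -> {set 'I_K} -> Om -> At)
  (th : 'I_K) (h : {set 'I_K}) (w : Om) : {ffun 'I_N -> Qt * At} :=
  [ffun n => (Q n th h w, A n th h w)].

Definition ordpred (k K : nat) (hk : (k < K)%N) : 'I_K :=
  Ordinal (leq_ltn_trans (leq_pred k) hk).

(* Fix the side information Z = (W_h, W_{k+1:K}).  What the (k+1)-th retrieval
   reveals about W_{1:k} is at least what the answer of any single server n
   reveals; by privacy that server sees the same joint law of (query, answer,
   messages) as in the k-th retrieval, and since its answer is a function of
   its query and the messages, this is at least H(A_n | Q_n, Z).  Summing over
   the N servers gives H(A_{1:N} | Q_{1:N}, Z), which dominates
   I(W_{1:k}; Q^[k], A^[k] | Z) because the queries are independent of the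
   messages.  The chain rule splits the latter into the term for W_{1:k-1}
   given (W_h, W_{k:K}) and I(W_k; Q^[k], A^[k] | Z) >= H(W_k | Z) - o(L) by
   reliability; finally H(W_k | Z) >= L (1 - r_k), as Z shows only the
   L r_k cached symbols of W_k, the other messages being independent of W_k.
   Every Shannon inequality used is an instance of the submodularity of
   entropy, which follows from ln x <= x - 1. *)

From HB Require Import structures.
From mathcomp Require Import all_boot all_order all_algebra.
From mathcomp Require Import reals exp.
From mathcomp Require Import ring lra zify.
From Corelib Require Import Setoid.
Import Order.TTheory GRing.Theory Num.Theory.
Local Open Scope ring_scope.

Set Implicit Arguments. Unset Strict Implicit. Unset Printing Implicit Defensive.

(** * Shannon inequalities *)

Lemma ln_le_subr1 (R : realType) (x : R) : 0 < x -> ln x <= x - 1.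
Proof.
move=> x_gt0; have := @le_ln1Dx R (x - 1); rewrite addrCA subrr addr0; apply.
by rewrite ltrBrDl subrr.
Qed.

Ltac rv_partition := rewrite /pairRV ?pair_equal_spec; intuition.

Section Probability.
Variables (R : realType) (Om : finType) (p : Om -> R).
Hypothesis p_distr : is_distr p.

Lemma p_ge0 w : 0 <= p w. Proof. by case: p_distr. Qed.

Lemma sum_p : \sum_w p w = 1. Proof. by case: p_distr. Qed.

Lemma prob_predT : prob p predT = 1. Proof. exact: sum_p. Qed.

Lemma prob_ge0 E : 0 <= prob p E.
Proof. by apply: sumr_ge0 => w _; exact: p_ge0. Qed.

Lemma p_le_prob (E : pred Om) w : E w -> p w <= prob p E.
Proof.
move=> Ew; rewrite /prob (bigD1 w) //= lerDl.
by apply: sumr_ge0 => v _; exact: p_ge0.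
Qed.

Lemma prob_indicator (E : pred Om) : prob p E = \sum_w p w * (E w)%:R.
Proof.
by rewrite /prob big_mkcond; apply: eq_bigr => w _; case: (E w); rewrite ?mulr1 ?mulr0.
Qed.

Definition Pr (T : eqType) (X : Om -> T) w := prob p (fun v => X v == X w).

Lemma Pr_gt0 (T : eqType) (X : Om -> T) w : 0 < p w -> 0 < Pr X w.
Proof. by move=> pw_gt0; apply: lt_le_trans pw_gt0 _; exact: p_le_prob. Qed.

Lemma sum_class_le1 (E : pred Om) : \sum_(w | E w) p w / prob p E <= 1.
Proof.
rewrite -mulr_suml; have [->|E_neq0] := eqVneq (prob p E) 0.
  by rewrite invr0 mulr0 ler01.
by rewrite mulfV.
Qed.

Lemma sum_ratio_cond_le (T : eqType) (E G : pred Om) (Y : Om -> T) :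
  \sum_(w | E w) p w * prob p (fun v => (Y v == Y w) && G v)
                     / prob p (fun v => E v && (Y v == Y w))
  <= prob p G.
Proof.
pose D v := prob p (fun u => E u && (Y u == Y v)).
have expand w : p w * prob p (fun v => (Y v == Y w) && G v) / D w =
    \sum_(v | (Y v == Y w) && G v) p v * (p w / D w).
  by rewrite /prob -mulr_suml mulrAC mulrC mulrA.
rewrite (eq_bigr _ (fun w _ => expand w)) (exchange_big_dep G) /=; last first.
  by move=> w v _ /andP[].
rewrite /prob; apply: ler_sum => v Gv; rewrite -mulr_sumr -[leRHS]mulr1.
apply: ler_wpM2l; first exact: p_ge0.
rewrite (eq_bigl (fun w => E w && (Y w == Y v))); last first.
  by move=> w; rewrite Gv andbT eq_sym.
rewrite (eq_bigr (fun w => p w / D v)) ?sum_class_le1 // => w /andP[_ /eqP Yw].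
by rewrite /D Yw.
Qed.

Lemma sum_submod_ratio_le1 (T U V : eqType) (X : Om -> T) (Y : Om -> U) (Z : Om -> V) :
  \sum_w p w * (Pr (pairRV X Z) w * Pr (pairRV Y Z) w
                / (Pr (pairRV (pairRV X Y) Z) w * Pr Z w)) <= 1.
Proof.
pose cell u := fun v => (X v == X u) && (Z v == Z u).
have expand w : p w * (Pr (pairRV X Z) w * Pr (pairRV Y Z) w
                       / (Pr (pairRV (pairRV X Y) Z) w * Pr Z w)) =
    \sum_(u | cell w u) p u * (p w * Pr (pairRV Y Z) w
                               / Pr (pairRV (pairRV X Y) Z) w / Pr Z w).
  rewrite -mulr_suml.
  have -> : \sum_(u | cell w u) p u = Pr (pairRV X Z) w.
    by apply: eq_bigl => u; rewrite /cell /pairRV xpair_eqE.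
  by rewrite invfM; ring.
rewrite (eq_bigr _ (fun w _ => expand w)) (exchange_big_dep predT) //= -[leRHS]sum_p.
apply: ler_sum => u _; rewrite -mulr_sumr -[leRHS]mulr1.
apply: ler_wpM2l; first exact: p_ge0.
have inner w : cell w u ->
    p w * Pr (pairRV Y Z) w / Pr (pairRV (pairRV X Y) Z) w / Pr Z w =
    p w * prob p (fun v => (Y v == Y w) && (Z v == Z u))
        / prob p (fun v => cell u v && (Y v == Y w)) / Pr Z u.
  move=> /andP[/eqP Xu /eqP Zu]; rewrite /Pr /pairRV -Zu; congr (_ * _ / _ / _).
  by apply: eq_bigl => v; rewrite /cell !xpair_eqE Xu andbAC.
rewrite (eq_bigr _ inner) -mulr_suml.
rewrite (eq_bigl (cell u)); last by move=> w; rewrite /cell (eq_sym (X u)) (eq_sym (Z u)).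
have [->|Pr_neq0] := eqVneq (Pr Z u) 0; first by rewrite invr0 mulr0 ler01.
rewrite ler_pdivrMr ?mul1r; last by rewrite lt_def Pr_neq0 prob_ge0.
exact: sum_ratio_cond_le.
Qed.

Lemma sum_ln_le0 (r : Om -> R) :
  (forall w, 0 < p w -> 0 < r w) -> \sum_w p w * r w <= 1 ->
  \sum_w p w * ln (r w) <= 0.
Proof.
move=> r_gt0 sum_le1; apply: le_trans (_ : \sum_w (p w * r w - p w) <= 0).
  apply: ler_sum => w _; move: (p_ge0 w); rewrite le0r => /orP[/eqP->|pw_gt0].
    by rewrite !mul0r subrr.
  by rewrite -[X in _ <= _ - X]mulr1 -mulrBr ler_wpM2l ?p_ge0 ?ln_le_subr1 ?r_gt0.
by rewrite sumrB sum_p subr_le0.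
Qed.

Lemma sum_by_values (V : eqType) (T : Om -> V) (s : seq V) (f : V -> R) :
  uniq s -> (forall w, T w \in s) ->
  \sum_w p w * f (T w) = \sum_(t <- s) prob p (fun w => T w == t) * f t.
Proof.
move=> s_uniq T_in; under [RHS]eq_bigr => t _ do rewrite /prob mulr_suml.
rewrite (exchange_big_dep predT) //=; apply: eq_bigr => w _.
rewrite (eq_bigl (pred1 (T w))) => [|t /=]; last by rewrite eq_sym.
by rewrite -big_filter filter_pred1_uniq // big_seq1.
Qed.

Lemma sum_same_distr (V : eqType) (T T' : Om -> V) (f : V -> R) :
  same_distr p T T' -> \sum_w p w * f (T w) = \sum_w p w * f (T' w).
Proof.
move=> TT'; pose s := undup ([seq T w | w <- enum Om] ++ [seq T' w | w <- enum Om]).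
have T_in w : T w \in s by rewrite mem_undup mem_cat map_f ?mem_enum.
have T'_in w : T' w \in s by rewrite mem_undup mem_cat map_f ?orbT ?mem_enum.
rewrite (sum_by_values f (undup_uniq _) T_in) (sum_by_values f (undup_uniq _) T'_in).
by apply: eq_bigr => t _; rewrite TT'.
Qed.

Section Entropy.
Variable b : R.

Local Notation H := (entropy p b).

Lemma entropyE (T : eqType) (X : Om -> T) : H X = - (\sum_w p w * ln (Pr X w)) / ln b.
Proof.
by rewrite /entropy mulNr mulr_suml; congr (- _); apply: eq_bigr => w _; rewrite mulrA.
Qed.

Lemma eq_entropy (T U : eqType) (X : Om -> T) (Y : Om -> U) :
  (forall w v, X w = X v <-> Y w = Y v) -> H X = H Y.
Proof.
move=> XY; rewrite !entropyE; congr (- _ / _); apply: eq_bigr => w _.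
by congr (_ * ln _); apply: eq_bigl => v; apply/eqP/eqP => /XY.
Qed.

Lemma entropy_const (T : eqType) (t : T) : H (fun _ => t) = 0.
Proof.
have Pr1 w : Pr (fun _ => t) w = 1.
  by rewrite -prob_predT; apply: eq_bigl => v; rewrite eqxx.
by rewrite entropyE big1 ?oppr0 ?mul0r // => w _; rewrite Pr1 ln1 mulr0.
Qed.

Lemma entropy_indep (T U : eqType) (X : Om -> T) (Y : Om -> U) :
  (forall w, prob p (fun v => (X v == X w) && (Y v == Y w)) = Pr X w * Pr Y w) ->
  H (pairRV X Y) = H X + H Y.
Proof.
move=> XY; rewrite !entropyE -mulrDl -opprD -big_split /=; congr (- _ / _).
apply: eq_bigr => w _; move: (p_ge0 w); rewrite le0r => /orP[/eqP->|pw_gt0].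
  by rewrite !mul0r addr0.
have -> : Pr (pairRV X Y) w = Pr X w * Pr Y w.
  by rewrite -XY /Pr /pairRV; apply: eq_bigl => v; rewrite xpair_eqE.
by rewrite lnM ?posrE ?Pr_gt0 // mulrDr.
Qed.

Lemma entropy_same_distr (V T : eqType) (X X' : Om -> V) (g : V -> T) (Y Y' : Om -> T) :
  same_distr p X X' -> (forall w, Y w = g (X w)) -> (forall w, Y' w = g (X' w)) ->
  H Y = H Y'.
Proof.
move=> XX' Yg Y'g.
have -> : H Y = H (fun w => g (X w)) by apply: eq_entropy => w v; rewrite !Yg.
have -> : H Y' = H (fun w => g (X' w)) by apply: eq_entropy => w v; rewrite !Y'g.
rewrite !entropyE /Pr.
have same_prob t : prob p (fun v => g (X v) == t) = prob p (fun v => g (X' v) == t).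
  by rewrite !prob_indicator (sum_same_distr (fun x => (g x == t)%:R) XX').
under eq_bigr => w _ do rewrite same_prob.
by rewrite (sum_same_distr (fun x => ln (prob p (fun v => g (X' v) == g x))) XX').
Qed.

Hypothesis lnb_gt0 : 0 < ln b.

Lemma entropy_submod (T U V : eqType) (X : Om -> T) (Y : Om -> U) (Z : Om -> V) :
  H (pairRV (pairRV X Y) Z) + H Z <= H (pairRV X Z) + H (pairRV Y Z).
Proof.
rewrite !entropyE -!mulrDl ler_pM2r ?invr_gt0 // -!opprD lerN2 -!big_split /=.
rewrite -subr_ge0 -sumrB /= -oppr_le0 -sumrN.
pose r w := Pr (pairRV X Z) w * Pr (pairRV Y Z) w
            / (Pr (pairRV (pairRV X Y) Z) w * Pr Z w).
have r_gt0 w : 0 < p w -> 0 < r w.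
  by move=> pw_gt0; rewrite /r divr_gt0 ?mulr_gt0 ?Pr_gt0.
rewrite (eq_bigr (fun w => p w * ln (r w))) => [|w _].
  exact: sum_ln_le0 r_gt0 (sum_submod_ratio_le1 X Y Z).
move: (p_ge0 w); rewrite le0r => /orP[/eqP->|pw_gt0].
  by rewrite !mul0r addr0 subrr oppr0.
rewrite /r ln_div ?posrE ?mulr_gt0 ?Pr_gt0 // !lnM ?posrE ?Pr_gt0 //; ring.
Qed.

Lemma entropy_le_pair (T U : eqType) (X : Om -> T) (Y : Om -> U) :
  H Y <= H (pairRV X Y).
Proof.
have XXY : H (pairRV (pairRV X X) Y) = H (pairRV X Y).
  by apply: eq_entropy => w v; rv_partition.
by have := entropy_submod X X Y; rewrite XXY lerD2l.
Qed.

Lemma entropy_pair_subadd (T U : eqType) (X : Om -> T) (Y : Om -> U) :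
  H (pairRV X Y) <= H X + H Y.
Proof.
have drop_unit (V : eqType) (Z : Om -> V) : H (pairRV Z (fun _ => tt)) = H Z.
  by apply: eq_entropy => w v; rv_partition.
by have := entropy_submod X Y (fun _ => tt); rewrite entropy_const addr0 !drop_unit.
Qed.

Lemma entropy_le_ln_size (T : eqType) (X : Om -> T) (s : seq T) :
  (forall w, X w \in s) -> H X <= ln (size s)%:R / ln b.
Proof.
move=> X_in; set m : R := (size s)%:R.
have m_gt0 (w : Om) : 0 < m.
  by rewrite ltr0n lt0n size_eq0; apply/eqP => s0; move: (X_in w); rewrite s0.
pose r w := (m * Pr X w)^-1.
have r_gt0 w : 0 < p w -> 0 < r w.
  by move=> pw_gt0; rewrite invr_gt0 mulr_gt0 ?Pr_gt0 ?(m_gt0 w).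
have sum_r : \sum_w p w * r w <= 1.
  pose invPr t := (prob p (fun v => X v == t))^-1.
  have -> : \sum_w p w * r w = m^-1 * \sum_w p w * invPr (X w).
    by rewrite mulr_sumr; apply: eq_bigr => w _; rewrite /r invfM /Pr /invPr; ring.
  rewrite (sum_by_values (T := X) invPr (undup_uniq s)) => [|w]; last by rewrite mem_undup.
  apply: le_trans (_ : m^-1 * (size (undup s))%:R <= 1).
    rewrite ler_wpM2l ?invr_ge0 ?ler0n // -sum1_size natr_sum.
    apply: ler_sum => t _; have [->|pt_neq0] := eqVneq (prob p (fun v => X v == t)) 0.
      by rewrite mul0r ler01.
    by rewrite mulfV.
  have [m0|m_neq0] := eqVneq m 0; first by rewrite m0 invr0 mul0r ler01.
  by rewrite ler_pdivrMl ?lt_def ?m_neq0 ?ler0n // mulr1 ler_nat size_undup.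
have := sum_ln_le0 r_gt0 sum_r.
rewrite (eq_bigr (fun w => - (p w * ln m) - p w * ln (Pr X w))) => [|w _]; last first.
  move: (p_ge0 w); rewrite le0r => /orP[/eqP->|pw_gt0].
    by rewrite !mul0r oppr0 addr0.
  by rewrite /r lnV ?posrE ?mulr_gt0 ?Pr_gt0 ?(m_gt0 w) // lnM ?posrE ?Pr_gt0 ?(m_gt0 w) //; ring.
rewrite sumrB sumrN -mulr_suml sum_p mul1r entropyE => ln_bound.
by rewrite ler_pM2r ?invr_gt0 // -subr_le0 addrC.
Qed.

Lemma centropy_ge0 (T U : eqType) (X : Om -> T) (Y : Om -> U) : 0 <= centropy p b X Y.
Proof. by rewrite /centropy subr_ge0 entropy_le_pair. Qed.

Lemma eq_centropy (T T' U U' : eqType)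
    (X : Om -> T) (X' : Om -> T') (Y : Om -> U) (Y' : Om -> U') :
  (forall w v, X w = X v <-> X' w = X' v) -> (forall w v, Y w = Y v <-> Y' w = Y' v) ->
  centropy p b X Y = centropy p b X' Y'.
Proof.
move=> XX' YY'; rewrite /centropy (eq_entropy YY').
by congr (_ - _); apply: eq_entropy => w v; rewrite /pairRV !pair_equal_spec XX' YY'.
Qed.

Lemma centropy_le_cond (T U V : eqType) (X : Om -> T) (Y : Om -> U) (Z : Om -> V) :
  centropy p b X (pairRV Y Z) <= centropy p b X Z.
Proof.
have XYZ : H (pairRV (pairRV X Y) Z) = H (pairRV X (pairRV Y Z)).
  by apply: eq_entropy => w v; rv_partition.
by have := entropy_submod X Y Z; rewrite /centropy XYZ => ?; lra.
Qed.

Lemma centropy_pair_le (T U V : eqType) (X : Om -> T) (Y : Om -> U) (Z : Om -> V) :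
  centropy p b (pairRV X Y) Z <= centropy p b X Z + centropy p b Y Z.
Proof. by have := entropy_submod X Y Z; rewrite /centropy => ?; lra. Qed.

Lemma centropy_le_coarser (T U U' : eqType) (X : Om -> T) (Y : Om -> U) (Y' : Om -> U') :
  (forall w v, Y w = Y v -> Y' w = Y' v) -> centropy p b X Y <= centropy p b X Y'.
Proof.
move=> YY'; rewrite -(@eq_centropy _ _ _ _ X X (pairRV Y Y') Y) //.
  exact: centropy_le_cond.
by move=> w v; rewrite /pairRV pair_equal_spec; split=> [[]|YE] //; split=> //; exact: YY'.
Qed.

Lemma minfo_le (T U U' V : eqType) (X : Om -> T) (Y : Om -> U) (Y' : Om -> U') (Z : Om -> V) :
  (forall w v, Y w = Y v -> Y' w = Y' v) -> minfo p b X Y' Z <= minfo p b X Y Z.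
Proof.
move=> YY'; rewrite /minfo lerD2l lerN2; apply: centropy_le_coarser => w v.
by rewrite /pairRV !pair_equal_spec => -[/YY' ? ?].
Qed.

Lemma centropy_seq_le_sum (I : Type) (T U V : eqType)
    (Qf : I -> Om -> T) (Af : I -> Om -> U) (Z : Om -> V) (s : seq I) :
  centropy p b (fun w => [seq Af i w | i <- s]) (pairRV (fun w => [seq Qf i w | i <- s]) Z)
  <= \sum_(i <- s) centropy p b (Af i) (pairRV (Qf i) Z).
Proof.
elim: s => [|i s IHs].
  rewrite big_nil /centropy; set Y := pairRV _ Z.
  by rewrite (@eq_entropy _ _ (pairRV _ Y) Y) ?subrr // => w v; rv_partition.
pose As w := [seq Af j w | j <- s]; pose Qs w := [seq Qf j w | j <- s].
rewrite big_cons (@eq_centropy _ _ _ _ _ (pairRV (Af i) As) _ (pairRV (Qf i) (pairRV Qs Z)));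
  last 2 first.
- move=> w v; rewrite /pairRV /As pair_equal_spec.
  by split=> [[-> ->] //|[e1 e2]]; rewrite /= e1 e2.
- move=> w v; rewrite /pairRV /Qs !pair_equal_spec.
  by split=> [[[-> ->] ->] //|[e1 [e2 ->]]]; rewrite /= e1 e2.
apply: le_trans (centropy_pair_le _ _ _) _; apply: lerD; last first.
  apply: le_trans IHs; apply: centropy_le_coarser => w v.
  by rewrite /pairRV !pair_equal_spec => -[_ []].
apply: centropy_le_coarser => w v.
by rewrite /pairRV !pair_equal_spec => -[? []].
Qed.

End Entropy.

End Probability.

(** * Messages and caches *)

Lemma ffun_eq (I : finType) (T : Type) (f g : I -> T) :
  [ffun i => f i] = [ffun i => g i] <-> forall i, f i = g i.
Proof.
split=> [fg i|fg]; last by apply/ffunP => i; rewrite !ffunE fg.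
by have := congr1 (fun h : {ffun I -> T} => h i) fg; rewrite !ffunE.
Qed.

Lemma map_enum_eq (I : finType) (T : Type) (f g : I -> T) :
  [seq f i | i <- enum I] = [seq g i | i <- enum I] <-> forall i, f i = g i.
Proof.
split=> [/eq_in_map fg i|fg]; last exact: eq_map.
by apply: fg; rewrite mem_enum.
Qed.

(* Privacy only constrains the joint law of (query, answer, msgs W), so the
   message-derived variables are rewritten as functions of msgs W, read
   through [msg_proj]. *)
Definition msg_proj {F : finType} {K L : nat} (j : 'I_K)
    (m : {ffun 'I_K -> {ffun 'I_L -> F}}) :=
  m j.

Section Messages.
Variables (Om F : finType) (K L M : nat) (W : 'I_K -> Om -> {ffun 'I_L -> F}).
Variable c : 'I_M -> nat.

Lemma msgs_eq w v : msgs W w = msgs W v <-> forall j, W j w = W j v.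
Proof. exact: ffun_eq. Qed.

Lemma Wseg_eq a b w v :
  Wseg W a b w = Wseg W a b v <-> forall j : 'I_K, (a <= j < b)%N -> W j w = W j v.
Proof.
rewrite /Wseg; split=> [/eq_in_map Wwv j j_ab|Wwv].
  by apply: Wwv; rewrite mem_filter j_ab mem_enum.
by apply/eq_in_map => j; rewrite mem_filter => /andP[/Wwv].
Qed.

Lemma cacheRV_eq h w v : msgs W w = msgs W v -> cacheRV W c h w = cacheRV W c h v.
Proof. by move/msgs_eq=> Wwv; apply: eq_map => jn; rewrite Wwv. Qed.

Lemma Wseg_cacheRV_Wseg_eq h a w v :
  Wseg W 0 a w = Wseg W 0 a v /\ cacheRV W c h w = cacheRV W c h v
    /\ Wseg W a K w = Wseg W a K v <-> msgs W w = msgs W v.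
Proof.
rewrite msgs_eq !Wseg_eq; split=> [[lo [_ hi]] j|Wwv].
  by case: (ltnP j a) => j_a; [apply: lo | apply: hi; rewrite j_a /=].
by split=> [j _|]; [|split=> [|j _]]; rewrite ?Wwv //; apply/cacheRV_eq/msgs_eq.
Qed.

Lemma Wseg_msgs a b w : Wseg W a b w = Wseg msg_proj a b (msgs W w).
Proof. by apply: eq_map => j; rewrite /msg_proj ffunE. Qed.

Lemma cacheRV_msgs h w : cacheRV W c h w = cacheRV msg_proj c h (msgs W w).
Proof. by apply: eq_map => jn; rewrite /msg_proj ffunE. Qed.

Hypothesis M_le_K : (M <= K)%N.

Lemma enum_prefix_set :
  enum [set j : 'I_K | (j < M)%N] = map (widen_ord M_le_K) (enum 'I_M).
Proof.
apply: (inj_map val_inj); rewrite -map_comp (eq_map (g := val)) // val_enum_ord.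
have -> : enum [set j : 'I_K | (j < M)%N] =
          filter (mem [set j : 'I_K | (j < M)%N]) (enum 'I_K) by rewrite enumT.
rewrite (eq_filter (a2 := preim val (fun n => (n < M)%N))) => [|j]; last by rewrite /= inE.
rewrite -filter_map val_enum_ord -(subnKC M_le_K) iotaD filter_cat add0n.
rewrite (eq_in_filter (a2 := predT)) => [|n]; last by rewrite mem_iota.
rewrite filter_predT (eq_in_filter (a2 := pred0)) ?filter_pred0 ?cats0 // => n.
by rewrite mem_iota => /andP[M_n _] /=; rewrite ltnNge M_n.
Qed.

Lemma card_prefix_set : #|[set j : 'I_K | (j < M)%N]| = M.
Proof. by rewrite cardE enum_prefix_set size_map size_enum_ord. Qed.

Lemma cacheRV_prefix_set w :
  cacheRV W c [set j : 'I_K | (j < M)%N] w =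
  [seq take (c i) (val (fgraph (W (widen_ord M_le_K i) w))) | i <- enum 'I_M].
Proof. by rewrite /cacheRV enum_prefix_set zip_map -map_comp. Qed.

Lemma cache_size_ord (i : 'I_M) : cache_size c i = c i.
Proof. by rewrite /cache_size (nth_map i) ?size_enum_ord // nth_ord_enum. Qed.

Lemma cache_size_le m : (forall i, c i <= L)%N -> (cache_size c m <= L)%N.
Proof.
move=> c_le_L; case: (ltnP m M) => [m_lt_M|M_le_m].
  by rewrite -[m]/(nat_of_ord (Ordinal m_lt_M)) cache_size_ord.
by rewrite /cache_size nth_default // size_map size_enum_ord.
Qed.

End Messages.

Section MessageIndependence.
Variables (R : realType) (Om : finType) (p : Om -> R).
Variables (F : finType) (K L : nat) (W : 'I_K -> Om -> {ffun 'I_L -> F}).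
Hypothesis p_distr : is_distr p.
Hypothesis W_indep : mutually_indep p W.

Definition other_msgs (j0 : 'I_K) w := [seq W j w | j <- enum 'I_K & j != j0].

Lemma other_msgs_eq j0 w v :
  other_msgs j0 w = other_msgs j0 v <-> forall j, j != j0 -> W j w = W j v.
Proof.
rewrite /other_msgs; split=> [/eq_in_map Wwv j j_neq|Wwv].
  by apply: Wwv; rewrite mem_filter j_neq mem_enum.
by apply/eq_in_map => j; rewrite mem_filter => /andP[/Wwv].
Qed.

Lemma prob_total (T : finType) (X : Om -> T) (E : pred Om) :
  prob p E = \sum_(a : T) prob p (fun v => E v && (X v == a)).
Proof.
rewrite /prob (exchange_big_dep E) //= => [|a v _ /andP[]//].
apply: eq_bigr => v Ev; rewrite (eq_bigl (pred1 (X v))) ?big_pred1_eq // => a.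
by rewrite /= Ev eq_sym.
Qed.

Lemma prob_other_msgs_msg j0 w (a : {ffun 'I_L -> F}) :
  prob p (fun v => (other_msgs j0 v == other_msgs j0 w) && (W j0 v == a)) =
  prob p (fun v => W j0 v == a) * \prod_(i | i != j0) Pr p (W i) w.
Proof.
pose x i := if i == j0 then a else W i w.
have -> : prob p (fun v => (other_msgs j0 v == other_msgs j0 w) && (W j0 v == a)) =
          prob p (fun v => [forall i, W i v == x i]).
  apply: eq_bigl => v; apply/andP/forallP => [[/eqP/other_msgs_eq Wvw /eqP Wj0] i|Wvx].
    by rewrite /x; case: (eqVneq i j0) => [->|/Wvw ->]; rewrite ?Wj0 eqxx.
  split; last by have := Wvx j0; rewrite /x eqxx.
  by apply/eqP/other_msgs_eq => j j_neq; have := Wvx j; rewrite /x (negbTE j_neq) => /eqP.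
rewrite W_indep (bigD1 j0) //= {1}/x eqxx; congr (_ * _).
by apply: eq_bigr => i /negbTE i_neq; rewrite /x i_neq.
Qed.

Lemma msg_indep_others j0 w :
  prob p (fun v => (W j0 v == W j0 w) && (other_msgs j0 v == other_msgs j0 w)) =
  Pr p (W j0) w * Pr p (other_msgs j0) w.
Proof.
have -> : prob p (fun v => (W j0 v == W j0 w) && (other_msgs j0 v == other_msgs j0 w)) =
          prob p (fun v => (other_msgs j0 v == other_msgs j0 w) && (W j0 v == W j0 w)).
  by apply: eq_bigl => v; rewrite andbC.
rewrite prob_other_msgs_msg; congr (_ * _).
rewrite /Pr (prob_total (W j0)) /=.
under [RHS]eq_bigr => a _ do rewrite prob_other_msgs_msg.
by rewrite -mulr_suml -(prob_total (W j0) predT) prob_predT // mul1r.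
Qed.

End MessageIndependence.

(** * The converse bound *)

Section Converse.
Variables (R : realType) (Om : finType) (p : Om -> R) (F : finType).
Variables (N K M L : nat) (Qt At : eqType).
Variables (W : 'I_K -> Om -> {ffun 'I_L -> F}).
Variables (Q : 'I_N -> 'I_K -> {set 'I_K} -> Om -> Qt).
Variables (A : 'I_N -> 'I_K -> {set 'I_K} -> Om -> At).
Variables (c : 'I_M -> nat) (eps : R).
Hypothesis p_distr : is_distr p.
Hypothesis F_gt1 : (1 < #|F|)%N.
Hypothesis M_le_K : (M <= K)%N.
Hypothesis c_le_L : forall i, (c i <= L)%N.

Let q : R := #|F|%:R.
Let h0 := [set j : 'I_K | (j < M)%N].

Hypothesis W_entropy : forall j, entropy p q (W j) = L%:R.
Hypothesis W_indep : mutually_indep p W.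
Hypothesis Q_indep : forall th, indep p (fun w => [ffun n => Q n th h0 w]) (msgs W).
Hypothesis A_determined :
  forall n th, centropy p q (A n th h0) (pairRV (Q n th h0) (msgs W)) = 0.
Hypothesis decodable :
  forall th, centropy p q (W th) (pairRV (cacheRV W c h0) (QAall Q A th h0)) <= eps.
Hypothesis private : forall n th th',
  same_distr p (fun w => (Q n th h0 w, A n th h0 w, msgs W w))
               (fun w => (Q n th' h0 w, A n th' h0 w, msgs W w)).

Variables (k : nat) (k_gt0 : (0 < k)%N) (k_lt_K : (k < K)%N).

Let th1 : 'I_K := Ordinal k_lt_K.
Let th0 : 'I_K := ordpred k_lt_K.
Let Wlo := Wseg W 0 k.
Let Wlo0 := Wseg W 0 k.-1.
Let Z1 := pairRV (cacheRV W c h0) (Wseg W k K).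
Let Z0 := pairRV (cacheRV W c h0) (Wseg W k.-1 K).
Let Wk := W th0.
Let QA th := QAall Q A th h0.
Let Qs th w := [ffun n => Q n th h0 w].
Let ck := cache_size c k.-1.
Let prefix w := take ck (val (fgraph (Wk w))).
Let others := other_msgs W th0.

Local Notation H := (entropy p q).
Local Notation HC := (centropy p q).
Local Notation I := (minfo p q).

Lemma lnq_gt0 : 0 < ln q.
Proof. by apply: ln_gt0; rewrite ltr1n. Qed.

Lemma Wlo_Z1_msgs w v : Wlo w = Wlo v /\ Z1 w = Z1 v <-> msgs W w = msgs W v.
Proof. by rewrite /Z1 /pairRV pair_equal_spec Wseg_cacheRV_Wseg_eq. Qed.

Lemma Wlo0_Z0_msgs w v : Wlo0 w = Wlo0 v /\ Z0 w = Z0 v <-> msgs W w = msgs W v.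
Proof. by rewrite /Z0 /pairRV pair_equal_spec Wseg_cacheRV_Wseg_eq. Qed.

Lemma Z0_Wk_Z1 w v : Z0 w = Z0 v <-> Wk w = Wk v /\ Z1 w = Z1 v.
Proof.
rewrite /Z0 /Z1 /pairRV !pair_equal_spec !Wseg_eq /Wk; split.
  move=> [Cwv hi]; split; last split => // j /andP[k_j _].
    by apply: hi; rewrite /= leqnn /=; lia.
  by apply: hi; rewrite (leq_trans (leq_pred k) k_j) /=.
move=> [Wk_wv [Cwv hi]]; split => // j /andP[k_j j_K].
case: (eqVneq (nat_of_ord j) k.-1) => [j_k|j_neq].
  by have -> : j = th0 by apply: val_inj.
by apply: hi; rewrite j_K andbT; lia.
Qed.

Lemma Z1_of_prefix_others w v : prefix w = prefix v -> others w = others v -> Z1 w = Z1 v.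
Proof.
move=> pre_wv /other_msgs_eq Wwv; rewrite /Z1 /pairRV pair_equal_spec; split; last first.
  apply/Wseg_eq => j /andP[k_j _]; apply: Wwv; apply/eqP => j_th0.
  by move: k_j; rewrite j_th0 /=; lia.
rewrite /h0 !(cacheRV_prefix_set _ _ M_le_K); apply: eq_map => i.
case: (eqVneq (widen_ord M_le_K i) th0) => [i_th0|]; last by move/Wwv ->.
have i_k : nat_of_ord i = k.-1 by rewrite -[RHS]/(nat_of_ord th0) -i_th0.
by move: pre_wv; rewrite /prefix /ck -i_k cache_size_ord /Wk i_th0.
Qed.

Lemma QA_eq th w v :
  QA th w = QA th v <->
  Qs th w = Qs th v /\ [ffun n => A n th h0 w] = [ffun n => A n th h0 v].
Proof.
rewrite /QA /QAall /Qs !ffun_eq.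
by split=> [QAwv|[Qwv Awv] n]; [split=> n; case: (QAwv n) | rewrite Qwv Awv].
Qed.

Lemma minfo_server_le n :
  I Wlo (pairRV (Q n th1 h0) (A n th1 h0)) Z1 <= I Wlo (QA th1) Z1.
Proof.
apply: (minfo_le p_distr lnq_gt0) => w v /ffun_eq QA_wv.
by have := QA_wv n; rewrite /pairRV.
Qed.

Definition msgs_view (m : {ffun 'I_K -> {ffun 'I_L -> F}}) :=
  (Wseg msg_proj 0 k m, (cacheRV msg_proj c h0 m, Wseg msg_proj k K m)).

Lemma msgs_viewE w : msgs_view (msgs W w) = (Wlo w, Z1 w).
Proof. by rewrite /msgs_view -!Wseg_msgs -cacheRV_msgs. Qed.

Lemma minfo_server_private n :
  I Wlo (pairRV (Q n th1 h0) (A n th1 h0)) Z1 = I Wlo (pairRV (Q n th0 h0) (A n th0 h0)) Z1.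
Proof.
have H_QAZ : H (pairRV (pairRV (Q n th1 h0) (A n th1 h0)) Z1) =
             H (pairRV (pairRV (Q n th0 h0) (A n th0 h0)) Z1).
  apply: (entropy_same_distr _ (private n th1 th0)
            (g := fun t => (t.1, (msgs_view t.2).2))) => w;
  by rewrite msgs_viewE.
have H_WQAZ : H (pairRV Wlo (pairRV (pairRV (Q n th1 h0) (A n th1 h0)) Z1)) =
              H (pairRV Wlo (pairRV (pairRV (Q n th0 h0) (A n th0 h0)) Z1)).
  apply: (entropy_same_distr _ (private n th1 th0)
            (g := fun t => ((msgs_view t.2).1, (t.1, (msgs_view t.2).2)))) => w;
  by rewrite msgs_viewE.
by rewrite /minfo /centropy H_QAZ H_WQAZ.
Qed.

Lemma centropy_answer_le_minfo n :
  HC (A n th0 h0) (pairRV (Q n th0 h0) Z1) <= I Wlo (pairRV (Q n th0 h0) (A n th0 h0)) Z1.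
Proof.
have := A_determined n th0; rewrite /centropy => /eqP; rewrite subr_eq0 => /eqP A_det.
have e1 : H (pairRV Wlo Z1) = H (msgs W).
  by apply: eq_entropy => w v; move: (Wlo_Z1_msgs w v); rv_partition.
have e2 : H (pairRV Wlo (pairRV (pairRV (Q n th0 h0) (A n th0 h0)) Z1)) =
          H (pairRV (A n th0 h0) (pairRV (Q n th0 h0) (msgs W))).
  by apply: eq_entropy => w v; move: (Wlo_Z1_msgs w v); rv_partition.
have e3 : H (pairRV (Q n th0 h0) (pairRV Wlo Z1)) = H (pairRV (Q n th0 h0) (msgs W)).
  by apply: eq_entropy => w v; move: (Wlo_Z1_msgs w v); rv_partition.
have e4 : H (pairRV (A n th0 h0) (pairRV (Q n th0 h0) Z1)) =
          H (pairRV (pairRV (Q n th0 h0) (A n th0 h0)) Z1).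
  by apply: eq_entropy => w v; rv_partition.
have := centropy_le_cond p_distr lnq_gt0 (Q n th0 h0) Wlo Z1.
by rewrite /minfo /centropy => ?; lra.
Qed.

Lemma centropy_answers_le_sum :
  HC (QA th0) Z1 - HC (Qs th0) Z1 <= \sum_n HC (A n th0 h0) (pairRV (Q n th0 h0) Z1).
Proof.
have := centropy_seq_le_sum p_distr lnq_gt0
  (fun n => Q n th0 h0) (fun n => A n th0 h0) Z1 (enum 'I_N).
rewrite big_enum /=; apply: le_trans; rewrite /centropy.
have e1 : H (pairRV (QA th0) Z1) =
          H (pairRV (fun w => [seq A n th0 h0 w | n <- enum 'I_N])
                    (pairRV (fun w => [seq Q n th0 h0 w | n <- enum 'I_N]) Z1)).
  apply: eq_entropy => w v; move: (QA_eq th0 w v).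
  by rewrite /pairRV /Qs !pair_equal_spec !ffun_eq !map_enum_eq; tauto.
have e2 : H (pairRV (Qs th0) Z1) =
          H (pairRV (fun w => [seq Q n th0 h0 w | n <- enum 'I_N]) Z1).
  by apply: eq_entropy => w v; rewrite /pairRV /Qs !pair_equal_spec ffun_eq map_enum_eq.
by rewrite e1 e2; lra.
Qed.

Lemma minfo_le_answers : I Wlo (QA th0) Z1 <= HC (QA th0) Z1 - HC (Qs th0) Z1.
Proof.
have e1 : H (pairRV (QA th0) (pairRV Wlo (pairRV (Qs th0) Z1))) =
          H (pairRV Wlo (pairRV (QA th0) Z1)).
  by apply: eq_entropy => w v; move: (QA_eq th0 w v); rv_partition.
have e2 : H (pairRV Wlo (pairRV (Qs th0) Z1)) = H (pairRV (Qs th0) (msgs W)).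
  by apply: eq_entropy => w v; move: (Wlo_Z1_msgs w v); rv_partition.
have e3 : H (pairRV (Qs th0) (msgs W)) = H (Qs th0) + H (msgs W).
  by apply: entropy_indep => // w; apply: Q_indep.
have e4 : H (pairRV Wlo Z1) = H (msgs W).
  by apply: eq_entropy => w v; move: (Wlo_Z1_msgs w v); rv_partition.
have := entropy_le_pair p_distr lnq_gt0 (QA th0) (pairRV Wlo (pairRV (Qs th0) Z1)).
have := entropy_pair_subadd p_distr lnq_gt0 (Qs th0) Z1.
by rewrite /minfo /centropy => *; lra.
Qed.

Lemma minfo_chain : I Wlo (QA th0) Z1 = I Wk (QA th0) Z1 + I Wlo0 (QA th0) Z0.
Proof.
have e1 : H (pairRV Wlo0 (pairRV (QA th0) Z0)) = H (pairRV Wlo (pairRV (QA th0) Z1)).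
  by apply: eq_entropy => w v; move: (Wlo_Z1_msgs w v) (Wlo0_Z0_msgs w v); rv_partition.
have e2 : H (pairRV (QA th0) Z0) = H (pairRV Wk (pairRV (QA th0) Z1)).
  by apply: eq_entropy => w v; move: (Z0_Wk_Z1 w v); rv_partition.
have e3 : H (pairRV Wlo0 Z0) = H (pairRV Wlo Z1).
  by apply: eq_entropy => w v; move: (Wlo_Z1_msgs w v) (Wlo0_Z0_msgs w v); rv_partition.
have e4 : H Z0 = H (pairRV Wk Z1).
  by apply: eq_entropy => w v; move: (Z0_Wk_Z1 w v); rv_partition.
by rewrite /minfo /centropy e1 e2 e3 e4; ring.
Qed.

Lemma entropy_prefix_le : H prefix <= ck%:R.
Proof.
pose s := [seq val t | t <- enum {: ck.-tuple F}].
have prefix_in w : prefix w \in s.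
  have size_prefix : size (prefix w) == ck.
    by rewrite size_takel // size_tuple card_ord; apply: cache_size_le.
  by rewrite -[prefix w]/(val (Tuple size_prefix)) map_f ?mem_enum.
apply: le_trans (entropy_le_ln_size p_distr lnq_gt0 prefix_in) _.
rewrite size_map -cardE card_tuple natrX lnXn ?ltr0n ?(ltn_trans _ F_gt1) //.
by rewrite mulrnAl divff // gt_eqF // lnq_gt0.
Qed.

Lemma centropy_Wk_ge : L%:R - ck%:R <= HC Wk Z1.
Proof.
apply: le_trans (centropy_le_coarser p_distr lnq_gt0 Wk (Y := pairRV prefix others) _)
  => [|w v]; last first.
  by rewrite /pairRV pair_equal_spec => -[]; exact: Z1_of_prefix_others.
have prefix_Wk w v : Wk w = Wk v -> prefix w = prefix v by rewrite /prefix => ->.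
have e1 : H (pairRV Wk (pairRV prefix others)) = H (pairRV Wk others).
  by apply: eq_entropy => w v; move: (prefix_Wk w v); rv_partition.
have e2 : H (pairRV Wk others) = H Wk + H others.
  by apply: entropy_indep => // w; exact: (msg_indep_others p_distr W_indep).
have := entropy_pair_subadd p_distr lnq_gt0 prefix others.
have := entropy_prefix_le; have := W_entropy th0.
by rewrite /centropy e1 e2 /Wk => *; lra.
Qed.

Lemma centropy_Wk_decode : HC Wk (pairRV (QA th0) Z1) <= eps.
Proof.
apply: le_trans (decodable th0); apply: (centropy_le_coarser p_distr lnq_gt0) => w v.
by rewrite /pairRV /QA /Z1 !pair_equal_spec; tauto.
Qed.

Lemma minfo_desired_ge : L%:R - ck%:R - eps <= I Wk (QA th0) Z1.
Proof. by have := centropy_Wk_ge; have := centropy_Wk_decode; rewrite /minfo => *; lra. Qed.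

Lemma converse_bound :
  L%:R - ck%:R - eps + I Wlo0 (QA th0) Z0 <= N%:R * I Wlo (QA th1) Z1.
Proof.
have per_server n : HC (A n th0 h0) (pairRV (Q n th0 h0) Z1) <= I Wlo (QA th1) Z1.
  apply: le_trans (centropy_answer_le_minfo n) _.
  by rewrite -minfo_server_private; exact: minfo_server_le.
have servers :
    \sum_n HC (A n th0 h0) (pairRV (Q n th0 h0) Z1) <= N%:R * I Wlo (QA th1) Z1.
  apply: le_trans (ler_sum _ (fun n _ => per_server n)) _.
  by rewrite sumr_const card_ord mulr_natl.
have := centropy_answers_le_sum; have := minfo_le_answers; have := minfo_desired_ge.
by rewrite minfo_chain => *; lra.
Qed.

End Converse.

Unset Implicit Arguments. Set Strict Implicit.

Theorem lemma2 (R : realType) (Om : finType) (p : Om -> R) (F : finType)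
  (N K M L : nat) (Qt At : eqType)
  (W : 'I_K -> Om -> {ffun 'I_L -> F})
  (Q : 'I_N -> 'I_K -> {set 'I_K} -> Om -> Qt)
  (A : 'I_N -> 'I_K -> {set 'I_K} -> Om -> At)
  (c : 'I_M -> nat) (eps : R) :
  is_distr p ->
  (1 < #|F|)%N -> (0 < N)%N -> (0 < L)%N -> (M <= K)%N ->
  (forall i, c i <= L)%N ->
  let q : R := (#|F|)%:R in
  (* messages: H(W_k) = L (q-ary units), jointly independent *)
  (forall j, entropy p q (W j) = L%:R) ->
  mutually_indep p W ->
  (* queries independent of the messages *)
  (forall th (h : {set 'I_K}), #|h| = M ->
     indep p (fun w => [ffun n => Q n th h w]) (msgs W)) ->
  (* answers are deterministic functions of query and messages *)
  (forall n th (h : {set 'I_K}), #|h| = M ->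
     centropy p q (A n th h) (pairRV (Q n th h) (msgs W)) = 0) ->
  (* reliability, with error term eps (the o(L)) *)
  (forall th (h : {set 'I_K}), #|h| = M ->
     centropy p q (W th) (pairRV (cacheRV W c h) (QAall Q A th h)) <= eps) ->
  (* privacy *)
  (forall n th th' (h h' : {set 'I_K}), #|h| = M -> #|h'| = M ->
     same_distr p (fun w => (Q n th h w, A n th h w, msgs W w))
                  (fun w => (Q n th' h' w, A n th' h' w, msgs W w))) ->
  let h0 := [set j : 'I_K | (j < M)%N] in
  forall (k : nat) (hk1 : (0 < k)%N) (hk2 : (k < K)%N),
  let th1 : 'I_K := Ordinal hk2 in      (* desired index k+1 (1-based) *)
  let th0 : 'I_K := ordpred hk2 in      (* desired index k   (1-based) *)
  let rk : R := (cache_size c k.-1)%:R / L%:R in   (* r_k, = 0 if k > M *)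
  minfo p q (Wseg W 0 k) (QAall Q A th1 h0)
            (pairRV (cacheRV W c h0) (Wseg W k K))
  >= N%:R^-1 * minfo p q (Wseg W 0 k.-1) (QAall Q A th0 h0)
                         (pairRV (cacheRV W c h0) (Wseg W k.-1 K))
     + L%:R / N%:R * (1 - rk) - eps.
Proof.
move=> p_distr F_gt1 N_gt0 L_gt0 M_le_K c_le_L q W_entropy W_indep Q_indep A_det
  decodable private h0 k k_gt0 k_lt_K; cbv zeta.
have card_h0 : #|h0| = M := card_prefix_set M_le_K.
have eps_ge0 : 0 <= eps.
  exact: le_trans (centropy_ge0 p_distr (lnq_gt0 R F_gt1) _ _)
                  (decodable (Ordinal k_lt_K) h0 card_h0).
have := converse_bound p_distr F_gt1 M_le_K c_le_L W_entropy W_indep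
  (fun th => Q_indep th h0 card_h0) (fun n th => A_det n th h0 card_h0)
  (fun th => decodable th h0 card_h0)
  (fun n th th' => private n th th' h0 h0 card_h0 card_h0) k_gt0 k_lt_K.
set I1 := minfo _ _ (Wseg W 0 k) _ _; set I0 := minfo _ _ (Wseg W 0 k.-1) _ _.
set ck : R := (cache_size c k.-1)%:R => bound.
have Nr_gt0 : 0 < (N%:R : R) by rewrite ltr0n.
have eps_N : eps / N%:R <= eps by rewrite ler_pdivrMr // ler_peMr // ler1n.
apply: le_trans (_ : (L%:R - ck - eps + I0) / N%:R <= I1).
  rewrite -subr_ge0.
  have -> : (L%:R - ck - eps + I0) / N%:R
            - (N%:R^-1 * I0 + L%:R / N%:R * (1 - ck / L%:R) - eps) = eps - eps / N%:R.
    by field; rewrite !pnatr_eq0 -!lt0n N_gt0 L_gt0.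
  by rewrite subr_ge0.
by rewrite ler_pdivrMr // mulrC.
Qed.
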